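(* Let $A$ be a trace class positive self-adjoint operator on a complex Hilbert space $\mathcal H$, let $e\in\mathcal H$ and $N\ge1$, and assume $Ae,A^2e,\dots,A^Ne$ are linearly independent. Then $$\mathrm{Tr}(A)\ge\frac{\det\Big(\big((A^{k+\ell}e|e)\big)_{0\le k\le N-1,\,0\le\ell\le N-2}\ \Big|\ \big((A^{k+N}e|e)\big)_{0\le k\le N-1}\Big)}{\det\big((A^{k+\ell}e|e)\big)_{0\le k,\ell\le N-1}},$$ where the numerator is the determinant of the $N\times N$ matrix whose first $N-1$ columns are indexed by $\ell=0,\dots,N-2$ with entries $(A^{k+\ell}e|e)$ and whose last column has entries $(A^{k+N}e|e)$ ($k$ the row index). Equality holds if and only if the range of $A$ has dimension $N$ and $e$ belongs to the range of $A$. *)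

From Stdlib Require Import Reals Lra Lia Arith.
Open Scope R_scope.

Record Cpx := mkC { Cre : R; Cim : R }.
Definition C0 : Cpx := mkC 0 0.
Definition C1 : Cpx := mkC 1 0.
Definition Cadd (a b : Cpx) : Cpx := mkC (Cre a + Cre b) (Cim a + Cim b).
Definition Cmul (a b : Cpx) : Cpx :=
  mkC (Cre a * Cre b - Cim a * Cim b) (Cre a * Cim b + Cim a * Cre b).
Definition Cconj (a : Cpx) : Cpx := mkC (Cre a) (- Cim a).

(* inner product linear in the first argument, conjugate-linear in the second *)
Record HilbertSpace := {
  carrier :> Type;
  vadd : carrier -> carrier -> carrier;
  vzero : carrier;
  vopp : carrier -> carrier;
  vscal : Cpx -> carrier -> carrier;
  inner : carrier -> carrier -> Cpx;
  vadd_assoc : forall x y z, vadd x (vadd y z) = vadd (vadd x y) z;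
  vadd_comm : forall x y, vadd x y = vadd y x;
  vadd_zero : forall x, vadd x vzero = x;
  vadd_opp : forall x, vadd x (vopp x) = vzero;
  vscal_one : forall x, vscal C1 x = x;
  vscal_assoc : forall a b x, vscal a (vscal b x) = vscal (Cmul a b) x;
  vscal_addl : forall a b x, vscal (Cadd a b) x = vadd (vscal a x) (vscal b x);
  vscal_addr : forall a x y, vscal a (vadd x y) = vadd (vscal a x) (vscal a y);
  inner_addl : forall x y z, inner (vadd x y) z = Cadd (inner x z) (inner y z);
  inner_scall : forall a x y, inner (vscal a x) y = Cmul a (inner x y);
  inner_conj : forall x y, inner y x = Cconj (inner x y);
  inner_pos : forall x, 0 <= Cre (inner x x);
  inner_def : forall x, inner x x = C0 -> x = vzero;
  complete : forall u : nat -> carrier,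
    (forall eps, 0 < eps -> exists n0, forall n m, (n0 <= n)%nat -> (n0 <= m)%nat ->
        sqrt (Cre (inner (vadd (u n) (vopp (u m))) (vadd (u n) (vopp (u m))))) < eps) ->
    exists l, forall eps, 0 < eps -> exists n0, forall n, (n0 <= n)%nat ->
        sqrt (Cre (inner (vadd (u n) (vopp l)) (vadd (u n) (vopp l)))) < eps
}.

Section Ops.
Variable H : HilbertSpace.

Definition hnorm (x : H) : R := sqrt (Cre (inner H x x)).

Fixpoint Rsum (n : nat) (f : nat -> R) : R :=
  match n with O => 0 | S m => Rsum m f + f m end.
Fixpoint vsum (n : nat) (f : nat -> H) : H :=
  match n with O => vzero H | S m => vadd H (vsum m f) (f m) end.

Definition is_linear_op (A : H -> H) : Prop :=
  (forall x y, A (vadd H x y) = vadd H (A x) (A y)) /\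
  (forall a x, A (vscal H a x) = vscal H a (A x)).
Definition is_bounded_op (A : H -> H) : Prop :=
  exists M, forall x, hnorm (A x) <= M * hnorm x.
Definition is_self_adjoint (A : H -> H) : Prop :=
  forall x y, inner H (A x) y = inner H x (A y).
Definition is_positive_op (A : H -> H) : Prop :=
  forall x, 0 <= Cre (inner H (A x) x).

Definition orthonormal (n : nat) (u : nat -> H) : Prop :=
  forall i j, (i < n)%nat -> (j < n)%nat ->
    inner H (u i) (u j) = if Nat.eqb i j then C1 else C0.

(* For a positive operator A, Tr(A) = sum_i (A u_i|u_i) over any orthonormal
   basis = sup of such sums over finite orthonormal families; A is trace
   class iff this supremum is finite.  [is_trace A t] : Tr(A) = t. *)
Definition is_trace (A : H -> H) (t : R) : Prop :=
  is_lub (fun r => exists n u, orthonormal n u /\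
                     r = Rsum n (fun i => Cre (inner H (A (u i)) (u i)))) t.

Definition lin_indep (n : nat) (v : nat -> H) : Prop :=
  forall c : nat -> Cpx, vsum n (fun i => vscal H (c i) (v i)) = vzero H ->
    forall i, (i < n)%nat -> c i = C0.

Definition range_dim (A : H -> H) (d : nat) : Prop :=
  exists b : nat -> H, lin_indep d b /\
    forall y, (exists x, y = A x) <-> (exists c : nat -> Cpx, y = vsum d (fun i => vscal H (c i) (b i))).

Definition in_range (A : H -> H) (y : H) : Prop := exists x, A x = y.

End Ops.

Fixpoint det (n : nat) (M : nat -> nat -> R) : R :=
  match n with
  | O => 1
  | S m => Rsum (S m) (fun j => (-1) ^ j * M O j *
             det m (fun i k => M (S i) (if Nat.ltb k j then k else S k)))
  end.

(* moments m_j = (A^j e | e) (real since A is self-adjoint; we take the real part,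
   which is the whole value) *)
Definition moment (H : HilbertSpace) (A : H -> H) (e : H) (j : nat) : R :=
  Cre (inner H (Nat.iter j A e) e).

Definition gram_det (H : HilbertSpace) (A : H -> H) (e : H) (N : nat) : R :=
  det N (fun k l => moment H A e (k + l)).

Definition num_det (H : HilbertSpace) (A : H -> H) (e : H) (N : nat) : R :=
  det N (fun k l => if Nat.ltb l (N - 1) then moment H A e (k + l)
                    else moment H A e (k + N)).

(* Let [K = span (e, A e, ..., A^(N-1) e)], [u] an orthonormal basis of [K] and
   [P] the orthogonal projection on [K].  Write [P (A^N e) = sum_l c_l A^l e].  The normal
   equations [(A^N e - P A^N e | A^k e) = 0] say that the last column of the numerator
   matrix is the Gram matrix times [c], so by Cramer's rule the quotient of determinants
   is [c_(N-1)].  Expanding each [u i] over the [A^l e], [sum_i (A u_i | u_i)] is also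
   [c_(N-1)]: [A] shifts [A^l e] to [A^(l+1) e], and only [A^N e] has a coordinate on
   [A^(N-1) e].  So the quotient is the trace of [A] over the orthonormal family [u],
   hence at most [Tr A].
   If equality holds, [A] vanishes on [K^perp] (otherwise adjoining a unit vector of
   [K^perp] to [u] increases the sum), so the range of [A] is [A K = span (A e, ...,
   A^N e)], of dimension [N], and [A^N e] lies in [K], which forces [e = A y].
   Conversely, if the range has dimension [N] and contains [e], it is [K]; then
   [A x = sum_a (x | z_a) z_a] with [z_a] in [K], and Bessel's inequality bounds the trace
   over any orthonormal family by [sum_a |z_a|^2 = sum_i (A u_i | u_i)]. *)

From Pilot Require Import Defs.
From Stdlib Require Import Reals Lra.
From HB Require Import structures.
From mathcomp Require Import all_boot all_order all_algebra.
From mathcomp Require Import boolp.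
Set Implicit Arguments. Unset Strict Implicit. Unset Printing Implicit Defensive.
Import GRing.Theory.
Delimit Scope R_scope with Re.
Open Scope R_scope.

HB.instance Definition _ := gen_eqMixin Cpx.
HB.instance Definition _ := gen_choiceMixin Cpx.

Definition Copp (a : Cpx) := mkC (- Cre a) (- Cim a).

Lemma Cpx_ext a b : Cre a = Cre b -> Cim a = Cim b -> a = b.
Proof. by case: a; case: b => ? ? ? ? /= -> ->. Qed.

Lemma CaddA : associative Cadd.
Proof. by move=> a b c; apply: Cpx_ext => /=; ring. Qed.
Lemma CaddC : commutative Cadd.
Proof. by move=> a b; apply: Cpx_ext => /=; ring. Qed.
Lemma Cadd0 : left_id Defs.C0 Cadd.
Proof. by move=> a; apply: Cpx_ext => /=; ring. Qed.
Lemma CaddN : left_inverse Defs.C0 Copp Cadd.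
Proof. by move=> a; apply: Cpx_ext => /=; ring. Qed.
HB.instance Definition _ := GRing.isZmodule.Build Cpx CaddA CaddC Cadd0 CaddN.

Lemma CmulA a b c : Cmul a (Cmul b c) = Cmul (Cmul a b) c.
Proof. by apply: Cpx_ext => /=; ring. Qed.
Lemma CmulC : commutative Cmul.
Proof. by move=> a b; apply: Cpx_ext => /=; ring. Qed.
Lemma Cmul1 : left_id Defs.C1 Cmul.
Proof. by move=> a; apply: Cpx_ext => /=; ring. Qed.
Lemma CmulDl : left_distributive Cmul Cadd.
Proof. by move=> a b c; apply: Cpx_ext => /=; ring. Qed.
Lemma C1_neq0 : Defs.C1 != Defs.C0.
Proof. by apply/eqP => /(f_equal Cre) /=; lra. Qed.
HB.instance Definition _ :=
  GRing.Zmodule_isComNzRing.Build Cpx CmulA CmulC Cmul1 CmulDl C1_neq0.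

Definition Cinv (a : Cpx) :=
  let n := (Cre a * Cre a + Cim a * Cim a)%Re in mkC (Cre a / n) (- Cim a / n).

Lemma CmulV (a : Cpx) : a != 0%R -> Cmul (Cinv a) a = 1%R.
Proof.
move=> /eqP a_neq0; have n_neq0 : (Cre a * Cre a + Cim a * Cim a)%Re <> 0.
  by move=> n0; apply: a_neq0; apply: Cpx_ext => /=; nra.
by apply: Cpx_ext => /=; field.
Qed.
Lemma Cinv0 : Cinv 0%R = 0%R.
Proof. by apply: Cpx_ext => /=; rewrite /Rdiv; ring. Qed.
HB.instance Definition _ := GRing.ComNzRing_isField.Build Cpx CmulV Cinv0.

HB.instance Definition _ (H : HilbertSpace) := gen_eqMixin (carrier H).
HB.instance Definition _ (H : HilbertSpace) := gen_choiceMixin (carrier H).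

Section HilbertModule.
Variable H : HilbertSpace.
Lemma vadd0l : left_id (vzero H) (@vadd H).
Proof. by move=> x; rewrite vadd_comm vadd_zero. Qed.
Lemma vaddNl : left_inverse (vzero H) (@vopp H) (@vadd H).
Proof. by move=> x; rewrite vadd_comm vadd_opp. Qed.
End HilbertModule.

HB.instance Definition _ (H : HilbertSpace) :=
  GRing.isZmodule.Build (carrier H) (@vadd_assoc H) (@vadd_comm H) (@vadd0l H) (@vaddNl H).
HB.instance Definition _ (H : HilbertSpace) :=
  GRing.Zmodule_isLmodule.Build Cpx (carrier H) (@vscal_assoc H) (@vscal_one H)
    (@vscal_addr H) (fun v a b => @vscal_addl H a b v).

Local Open Scope ring_scope.

Lemma CreB (a b : Cpx) : Cre (a - b) = (Cre a - Cre b)%Re. Proof. by []. Qed.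
Lemma CreM (a b : Cpx) : Cre (a * b) = (Cre a * Cre b - Cim a * Cim b)%Re.
Proof. by []. Qed.

Lemma CconjD (a b : Cpx) : Cconj (a + b) = Cconj a + Cconj b.
Proof. by apply: Cpx_ext => /=; ring. Qed.
Lemma CconjM (a b : Cpx) : Cconj (a * b) = Cconj a * Cconj b.
Proof. by apply: Cpx_ext => /=; ring. Qed.
Lemma CconjK (a : Cpx) : Cconj (Cconj a) = a.
Proof. by apply: Cpx_ext => /=; ring. Qed.
Lemma Cconj0 : Cconj 0 = 0.
Proof. by apply: Cpx_ext => /=; ring. Qed.
Lemma CconjN (a : Cpx) : Cconj (- a) = - Cconj a.
Proof. by apply: Cpx_ext => /=; ring. Qed.
Lemma Cconj_sum n (F : 'I_n -> Cpx) : Cconj (\sum_(i < n) F i) = \sum_(i < n) Cconj (F i).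
Proof. exact: (big_morph Cconj CconjD Cconj0). Qed.

Definition RtoC (r : R) : Cpx := mkC r 0.

Lemma RtoCD r s : RtoC (r + s) = RtoC r + RtoC s.
Proof. by apply: Cpx_ext => /=; ring. Qed.
Lemma RtoCM r s : RtoC (r * s) = RtoC r * RtoC s.
Proof. by apply: Cpx_ext => /=; ring. Qed.
Lemma RtoCN r : RtoC (- r) = - RtoC r.
Proof. by apply: Cpx_ext => /=; ring. Qed.
Lemma RtoC_inj : injective RtoC.
Proof. by move=> r s []. Qed.
Lemma Cconj_RtoC r : Cconj (RtoC r) = RtoC r.
Proof. by apply: Cpx_ext => /=; ring. Qed.
Lemma RtoC_Rsum n (f : nat -> R) : RtoC (Rsum n f) = \sum_(i < n) RtoC (f i).
Proof. by elim: n => [|n IH]; rewrite ?big_ord0 // big_ord_recr /= RtoCD IH. Qed.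
Lemma RtoC_sign j : RtoC ((-1) ^ j) = (-1) ^+ j.
Proof. by elim: j => [|j IH] //=; rewrite exprS RtoCM IH RtoCN. Qed.

Lemma Cre_sum n (F : nat -> Cpx) : Cre (\sum_(i < n) F i) = Rsum n (fun i => Cre (F i)).
Proof. by elim: n => [|n IH]; rewrite ?big_ord0 // big_ord_recr /= IH. Qed.

Lemma Rsum_ext n f g : (forall i, (i < n)%N -> f i = g i) -> Rsum n f = Rsum n g.
Proof.
elim: n => [|n IH] fg //=.
by rewrite fg // IH // => i lt_in; rewrite fg // ltnW.
Qed.
Lemma Rsum_le n f g : (forall i, (i < n)%N -> (f i <= g i)%Re) -> (Rsum n f <= Rsum n g)%Re.
Proof.
elim: n => [|n IH] fg /=; first lra.
by apply: Rplus_le_compat; [apply: IH => i lt_in; apply: fg; rewrite ltnW | apply: fg].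
Qed.

Lemma sum_ord_delta (M : nmodType) r (F : nat -> M) b : (b < r)%N ->
  \sum_(a < r) F a *+ ((a : nat) == b) = F b.
Proof.
move=> lt_br; rewrite (bigD1 (Ordinal lt_br)) //= eqxx big1 ?addr0 // => a.
by rewrite -(inj_eq val_inj) /= => /negbTE ->.
Qed.

Section Span.
Variables (F : fieldType) (V : lmodType F).

Definition in_span n (x : nat -> V) y := exists c : nat -> F, y = \sum_(l < n) c l *: x l.

Definition indep n (x : nat -> V) :=
  forall c : nat -> F, \sum_(i < n) c i *: x i = 0 -> forall i, (i < n)%N -> c i = 0.

Lemma in_span0 n x : in_span n x 0.
Proof. by exists (fun=> 0); rewrite big1 // => i _; rewrite scale0r. Qed.

Lemma in_spanD n x y z : in_span n x y -> in_span n x z -> in_span n x (y + z).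
Proof.
move=> [c ->] [d ->]; exists (fun l => c l + d l); rewrite -big_split /=.
by apply: eq_bigr => i _; rewrite scalerDl.
Qed.

Lemma in_spanZ n x a y : in_span n x y -> in_span n x (a *: y).
Proof.
move=> [c ->]; exists (fun l => a * c l); rewrite scaler_sumr.
by apply: eq_bigr => i _; rewrite scalerA.
Qed.

Lemma in_spanB n x y z : in_span n x y -> in_span n x z -> in_span n x (y - z).
Proof. by move=> ? ?; apply: in_spanD; rewrite // -scaleN1r; apply: in_spanZ. Qed.

Lemma in_span_sum n x m (G : 'I_m -> V) :
  (forall i, in_span n x (G i)) -> in_span n x (\sum_(i < m) G i).
Proof.
elim: m G => [|m IH] G G_span; first by rewrite big_ord0; apply: in_span0.
by rewrite big_ord_recr; apply: in_spanD; [apply: IH | apply: G_span].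
Qed.

Lemma in_span_vec n x l : (l < n)%N -> in_span n x (x l).
Proof.
move=> lt_ln; exists (fun i => (i == l)%:R).
by rewrite (eq_bigr (fun i : 'I_n => x i *+ (i == l :> nat))) ?sum_ord_delta // => i _;
  rewrite scaler_nat.
Qed.

Lemma in_span_widen n n' x y : (n <= n')%N -> in_span n x y -> in_span n' x y.
Proof.
move=> le_nn' [c ->]; exists (fun l => if (l < n)%N then c l else 0).
rewrite -(subnKC le_nn') big_split_ord /= [X in _ = _ + X]big1 ?addr0.
  by apply: eq_bigr => i _; rewrite ltn_ord.
by move=> i _; rewrite ltnNge leq_addr scale0r.
Qed.

Lemma in_span_trans n x m (y : nat -> V) z :
  (forall i, (i < m)%N -> in_span n x (y i)) -> in_span m y z -> in_span n x z.
Proof. by move=> y_span [c ->]; apply: in_span_sum => i; apply/in_spanZ/y_span. Qed.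

Lemma span_coef_choice r n (h x : nat -> V) :
  (forall a, (a < r)%N -> in_span n x (h a)) ->
  exists alpha : nat -> nat -> F, forall a, (a < r)%N -> h a = \sum_(l < n) alpha a l *: x l.
Proof.
move=> h_span.
have coef a : exists c : nat -> F, (a < r)%N -> h a = \sum_(l < n) c l *: x l.
  by case: (ltnP a r) => [/h_span [c hc] | _]; [exists c | exists (fun=> 0)].
by have [alpha] := choice coef; exists alpha.
Qed.

Lemma indep_prev n x : indep n.+1 x -> indep n x.
Proof.
move=> x_indep c cx0 i lt_in.
have := x_indep (fun l => if (l < n)%N then c l else 0).
rewrite big_ord_recr /= ltnn scale0r addr0.
rewrite (eq_bigr (fun l : 'I_n => c l *: x l)) => [/(_ cx0 i) | l _]; last by rewrite ltn_ord.
by rewrite lt_in ltnW //; apply.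
Qed.

Lemma indep_last_notin_span n x : indep n.+1 x -> ~ in_span n x (x n).
Proof.
move=> x_indep [c xn_span].
have := x_indep (fun l => if (l < n)%N then c l else -1).
rewrite big_ord_recr /= ltnn scaleN1r.
rewrite (eq_bigr (fun l : 'I_n => c l *: x l)) => [|l _]; last by rewrite ltn_ord.
rewrite -xn_span subrr => /(_ erefl n (ltnSn n)); rewrite ltnn => /eqP.
by rewrite oppr_eq0 oner_eq0.
Qed.

End Span.

Definition semi_inner_product (V : lmodType Cpx) (phi : V -> V -> Cpx) :=
  [/\ forall x y z, phi (x + y) z = phi x z + phi y z,
      forall a x y, phi (a *: x) y = a * phi x y,
      forall x y, phi y x = Cconj (phi x y) &
      forall x, (0 <= Cre (phi x x))%Re].

Definition definite (V : lmodType Cpx) (phi : V -> V -> Cpx) :=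
  forall y, phi y y = 0 -> y = 0.

Definition orthonormal_for (V : lmodType Cpx) (phi : V -> V -> Cpx) r (h : nat -> V) :=
  forall a b, (a < r)%N -> (b < r)%N -> phi (h a) (h b) = (a == b)%:R.

Definition residual (V : lmodType Cpx) (phi : V -> V -> Cpx) r (h : nat -> V) y :=
  y - \sum_(a < r) phi y (h a) *: h a.

Definition normalize (V : lmodType Cpx) (phi : V -> V -> Cpx) y :=
  RtoC (/ sqrt (Cre (phi y y))) *: y.

Definition extend (T : Type) r (h : nat -> T) (g : T) a := if (a < r)%N then h a else g.

Lemma extend_lt T r (h : nat -> T) g a : (a < r)%N -> extend r h g a = h a.
Proof. by rewrite /extend => ->. Qed.
Lemma extend_last T r (h : nat -> T) g : extend r h g r = g.
Proof. by rewrite /extend ltnn. Qed.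

Section SemiInnerProduct.
Variables (V : lmodType Cpx) (phi : V -> V -> Cpx).
Hypothesis phiP : semi_inner_product phi.

Lemma sipDl x y z : phi (x + y) z = phi x z + phi y z. Proof. by case: phiP. Qed.
Lemma sipZl a x y : phi (a *: x) y = a * phi x y. Proof. by case: phiP. Qed.
Lemma sipC x y : phi y x = Cconj (phi x y). Proof. by case: phiP. Qed.
Lemma sip_ge0 x : (0 <= Cre (phi x x))%Re. Proof. by case: phiP. Qed.

Lemma sipZr a x y : phi x (a *: y) = Cconj a * phi x y.
Proof. by rewrite sipC sipZl CconjM -sipC. Qed.
Lemma sip0l y : phi 0 y = 0.
Proof. by have := sipZl 0 0 y; rewrite scale0r mul0r. Qed.
Lemma sip0r y : phi y 0 = 0.
Proof. by rewrite sipC sip0l Cconj0. Qed.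
Lemma sipNl x y : phi (- x) y = - phi x y.
Proof. by rewrite -scaleN1r sipZl mulN1r. Qed.
Lemma sipBl x y z : phi (x - y) z = phi x z - phi y z.
Proof. by rewrite sipDl sipNl. Qed.
Lemma sipBr x y z : phi x (y - z) = phi x y - phi x z.
Proof. by rewrite sipC sipBl CconjD CconjN -!sipC. Qed.
Lemma sip_suml n (G : 'I_n -> V) y : phi (\sum_(i < n) G i) y = \sum_(i < n) phi (G i) y.
Proof.
elim: n G => [|n IH] G; first by rewrite !big_ord0 sip0l.
by rewrite !big_ord_recr sipDl IH.
Qed.
Lemma sip_sumr n (G : 'I_n -> V) y : phi y (\sum_(i < n) G i) = \sum_(i < n) phi y (G i).
Proof.
by rewrite sipC sip_suml Cconj_sum; apply: eq_bigr => i _; rewrite -sipC.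
Qed.

Lemma sip_real x : phi x x = RtoC (Cre (phi x x)).
Proof. by apply: Cpx_ext => //=; have /(f_equal Cim) /= := sipC x x; lra. Qed.

Lemma sip_scale_real q q' x y :
  phi (RtoC q *: x) (RtoC q' *: y) = RtoC (q * q') * phi x y.
Proof. by rewrite sipZl sipZr Cconj_RtoC mulrA RtoCM. Qed.

(* Cauchy-Schwarz in its degenerate case: [t |-> phi (y - t a z) (y - t a z)] with
   [a = phi y z] is a nonnegative real quadratic vanishing at [0], so its slope
   [-2 |a|^2] there cannot be negative. *)
Lemma sip_null_orth y z : phi y y = 0 -> phi y z = 0.
Proof.
move=> yy0; set a := phi y z; set r := Cre (phi z z); set p := (Cre a ^ 2 + Cim a ^ 2)%Re.
have r_ge0 : (0 <= r)%Re by apply: sip_ge0.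
have quad s : (0 <= s * (s * r - 2) * p)%Re.
  have := sip_ge0 (y - (RtoC s * a) *: z).
  rewrite sipBl !sipBr !sipZl !sipZr yy0 (sipC y z) -/a (sip_real z) -/r.
  by match goal with |- (0 <= ?X)%Re -> _ =>
    have -> : X = (s * (s * r - 2) * p)%Re by rewrite /p /=; ring end.
have [p0|p_neq0] := Req_dec p 0.
  by apply: Cpx_ext => /=; rewrite /p in p0; nra.
have p_gt0 : (0 < p)%Re by rewrite /p in p_neq0 *; nra.
have s_gt0 : (0 < / (r + 1))%Re by apply: Rinv_0_lt_compat; lra.
have sr_lt1 : (/ (r + 1) * r < 1)%Re.
  have -> : (/ (r + 1) * r = 1 - / (r + 1))%Re by field; lra.
  lra.
have sp_gt0 : (0 < / (r + 1) * p)%Re by apply: Rmult_lt_0_compat.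
have := quad (/ (r + 1))%Re; rewrite Rmult_comm -Rmult_assoc (Rmult_comm p); nra.
Qed.

Section Orthonormal.
Variables (r : nat) (h : nat -> V).
Hypothesis h_on : orthonormal_for phi r h.

Lemma residual_orth y b : (b < r)%N -> phi (residual phi r h y) (h b) = 0.
Proof.
move=> lt_br; rewrite sipBl sip_suml.
rewrite (eq_bigr (fun a : 'I_r => phi y (h a) *+ (a == b :> nat))) => [|a _].
  by rewrite (sum_ord_delta (fun a => phi y (h a))) // subrr.
by rewrite sipZl h_on // mulr_natr.
Qed.

Lemma residual_orth_span y z : in_span r h z -> phi (residual phi r h y) z = 0.
Proof.
move=> [c ->]; rewrite sip_sumr big1 // => a _.
by rewrite sipZr residual_orth // mulr0.
Qed.

Lemma sip_residual_l y g : (forall a, (a < r)%N -> phi (h a) g = 0) ->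
  phi (residual phi r h y) g = phi y g.
Proof.
move=> g_orth; rewrite sipBl sip_suml big1 ?subr0 // => a _.
by rewrite sipZl g_orth // mulr0.
Qed.

Lemma residual_norm y : phi (residual phi r h y) (residual phi r h y) =
  phi y y - \sum_(a < r) phi y (h a) * Cconj (phi y (h a)).
Proof.
rewrite [X in phi X _]/residual sipBl sip_suml big1 => [|a _]; last first.
  by rewrite sipZl (sipC _ (h a)) residual_orth // Cconj0 mulr0.
rewrite subr0 sipBr sip_sumr; congr (_ - _); apply: eq_bigr => a _.
by rewrite sipZr mulrC.
Qed.

Lemma bessel y :
  (Cre (\sum_(a < r) phi y (h a) * Cconj (phi y (h a))) <= Cre (phi y y))%Re.
Proof. by have := sip_ge0 (residual phi r h y); rewrite residual_norm CreB; lra. Qed.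

Lemma residual_extend g y :
  residual phi r.+1 (extend r h g) y = residual phi r h y - phi y g *: g.
Proof.
rewrite /residual big_ord_recr /= extend_last opprD addrA.
by congr (_ - _ - _); apply: eq_bigr => a _; rewrite extend_lt.
Qed.

Lemma orthonormal_extend g : (forall b, (b < r)%N -> phi g (h b) = 0) -> phi g g = 1 ->
  orthonormal_for phi r.+1 (extend r h g).
Proof.
move=> g_orth gg1 a b; rewrite !ltnS.
rewrite leq_eqVlt => /orP [/eqP-> | lt_ar]; rewrite leq_eqVlt => /orP [/eqP-> | lt_br].
- by rewrite extend_last gg1 eqxx.
- by rewrite extend_last extend_lt // g_orth // (gtn_eqF lt_br).
- by rewrite extend_last extend_lt // sipC g_orth // Cconj0 (ltn_eqF lt_ar).
- by rewrite !extend_lt // h_on.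
Qed.

End Orthonormal.

Section Normalize.
Variable y : V.
Hypothesis yy_gt0 : (0 < Cre (phi y y))%Re.

Lemma normalize_unit : phi (normalize phi y) (normalize phi y) = 1.
Proof.
rewrite sip_scale_real (sip_real y) -RtoCM; set s := sqrt _.
have s_gt0 : (0 < s)%Re by apply: sqrt_lt_R0.
have <- : (s * s = Cre (phi y y))%Re by apply: sqrt_sqrt; apply: Rlt_le.
by have -> : (/ s * / s * (s * s) = 1)%Re by field; lra.
Qed.

Lemma residual_normalize_self : y - phi y (normalize phi y) *: normalize phi y = 0.
Proof.
rewrite sipZr Cconj_RtoC (sip_real y) scalerA -!RtoCM; set s := sqrt _.
have s_gt0 : (0 < s)%Re by apply: sqrt_lt_R0.
have <- : (s * s = Cre (phi y y))%Re by apply: sqrt_sqrt; apply: Rlt_le.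
have -> : (/ s * (s * s) * / s = 1)%Re by field; lra.
by rewrite scale1r subrr.
Qed.

End Normalize.

(* Vectors whose residual is [phi]-null are skipped, so [r <= n] in general; no vector
   is skipped when [phi] is definite and the [x k] are independent. *)
Lemma gram_schmidt n (x : nat -> V) : exists r (h : nat -> V),
  [/\ orthonormal_for phi r h, forall a, (a < r)%N -> in_span n x (h a),
      forall k, (k < n)%N -> phi (residual phi r h (x k)) (residual phi r h (x k)) = 0 &
      definite phi -> indep n x -> r = n].
Proof.
elim: n => [|n [r [h [h_on h_span res_null r_eq]]]].
  by exists 0%N, (fun=> 0); split => // a.
have h_span' a : (a < r)%N -> in_span n.+1 x (h a).
  by move=> lt_ar; apply: in_span_widen (h_span a lt_ar).
set y := residual phi r h (x n).
have [yy0 | yy_neq0] := Req_dec (Cre (phi y y)) 0.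
  have yy0' : phi y y = 0 by rewrite sip_real yy0.
  exists r, h; split => //.
    by move=> k; rewrite ltnS leq_eqVlt => /orP [/eqP-> | /res_null].
  move=> phi_def x_indep; case: (indep_last_notin_span x_indep).
  have -> : x n = \sum_(a < r) phi (x n) (h a) *: h a.
    by apply/eqP; rewrite -subr_eq0 -/(residual _ _ _ _) -/y (phi_def _ yy0').
  by apply: in_span_sum => a; apply/in_spanZ/h_span.
have yy_gt0 : (0 < Cre (phi y y))%Re by have := sip_ge0 y; lra.
set g := normalize phi y.
have g_orth b : (b < r)%N -> phi g (h b) = 0.
  by move=> lt_br; rewrite sipZl residual_orth // mulr0.
have hg_orth a : (a < r)%N -> phi (h a) g = 0.
  by move=> lt_ar; rewrite sipC g_orth // Cconj0.
exists r.+1, (extend r h g); split.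
- exact: orthonormal_extend (normalize_unit yy_gt0).
- move=> a; rewrite ltnS leq_eqVlt => /orP [/eqP-> | lt_ar]; last first.
    by rewrite extend_lt //; apply: h_span'.
  rewrite extend_last; apply/in_spanZ/in_spanB; first exact: in_span_vec.
  by apply: in_span_sum => b; apply/in_spanZ/h_span'.
- move=> k; rewrite residual_extend -(sip_residual_l (x k) hg_orth).
  rewrite ltnS leq_eqVlt => /orP [/eqP-> | lt_kn].
    by rewrite -/y residual_normalize_self // sip0l.
  by rewrite (sip_null_orth g (res_null _ lt_kn)) scale0r subr0 res_null.
- by move=> phi_def /indep_prev x_indep; rewrite r_eq.
Qed.

End SemiInnerProduct.

Section DefiniteOrthonormal.
Variables (V : lmodType Cpx) (phi : V -> V -> Cpx) (r : nat) (h : nat -> V).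
Hypotheses (phiP : semi_inner_product phi) (phi_def : definite phi).
Hypothesis h_on : orthonormal_for phi r h.

Lemma residual_span_eq0 z : in_span r h z -> residual phi r h z = 0.
Proof.
move=> z_span; apply: phi_def; rewrite {2}/residual (sipBr phiP).
rewrite !(residual_orth_span phiP h_on) ?subrr //.
by exists (fun a => phi z (h a)).
Qed.

Lemma parseval z : in_span r h z ->
  \sum_(a < r) phi z (h a) * Cconj (phi z (h a)) = phi z z.
Proof.
move=> z_span; apply/eqP; rewrite eq_sym -subr_eq0; apply/eqP.
by rewrite -(residual_norm phiP h_on) residual_span_eq0 // (sip0l phiP).
Qed.

End DefiniteOrthonormal.

Lemma dependent_of_span_lt (F : fieldType) (V : lmodType F) m n (X b : nat -> V) :
  (n < m)%N -> (forall i, (i < m)%N -> in_span n b (X i)) ->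
  exists2 d : nat -> F, exists2 i, (i < m)%N & d i != 0 & \sum_(i < m) d i *: X i = 0.
Proof.
case: m => [|m] // lt_nm /span_coef_choice [M X_M].
set Mx : 'M[F]_(m.+1, n) := \matrix_(i, j) M i j.
have : kermx Mx != 0.
  rewrite kermx_eq0 /row_free; apply: contraL lt_nm => /eqP <-.
  by rewrite -leqNgt rank_leq_col.
case/rowV0Pn => z /sub_kermxP zM0 z_neq0.
exists (fun i => z 0 (inord i)).
  by case/rV0Pn: z_neq0 => i zi; exists i; rewrite ?inord_val.
rewrite (eq_bigr (fun i : 'I_m.+1 => \sum_(j < n) (z 0 i * M i j) *: b j)); last first.
  move=> i _; rewrite inord_val X_M // scaler_sumr.
  by apply: eq_bigr => j _; rewrite scalerA.
rewrite exchange_big /= big1 // => j _; rewrite -scaler_suml.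
have /(f_equal (fun v : 'rV[F]_n => v 0 j)) := zM0; rewrite !mxE => zMj.
by rewrite (eq_bigr (fun i : 'I_m.+1 => z 0 i * Mx i j)) ?zMj ?scale0r // => i _; rewrite mxE.
Qed.

Lemma in_span_indep_full (F : fieldType) (V : lmodType F) n (x b : nat -> V) y :
  indep n x -> (forall i, (i < n)%N -> in_span n b (x i)) -> in_span n b y ->
  in_span n x y.
Proof.
move=> x_indep x_span y_span.
have [|d [i lt_in di_neq0] dX0] := @dependent_of_span_lt _ _ n.+1 n (extend n x y) b (ltnSn n).
  move=> i; rewrite ltnS leq_eqVlt => /orP [/eqP-> | lt_in]; first by rewrite extend_last.
  by rewrite extend_lt //; apply: x_span.
move: dX0; rewrite big_ord_recr /= extend_last.
rewrite (eq_bigr (fun i : 'I_n => d i *: x i)) => [dX0 | j _]; last by rewrite extend_lt.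
have [dn0 | dn_neq0] := eqVneq (d n) 0.
  move: dX0; rewrite dn0 scale0r addr0 => /x_indep x_dep.
  move: lt_in di_neq0; rewrite ltnS leq_eqVlt => /orP [/eqP-> | /x_dep->];
    by rewrite ?dn0 eqxx.
have dny : d n *: y = - \sum_(i < n) d i *: x i.
  by apply/eqP; rewrite -addr_eq0 addrC dX0.
have -> : y = (d n)^-1 *: (d n *: y) by rewrite scalerA mulVf ?scale1r.
rewrite dny -scaleN1r; do 2 apply: in_spanZ.
by apply: in_span_sum => j; apply/in_spanZ/in_span_vec.
Qed.

Lemma gram_det_neq0 (V : lmodType Cpx) (phi : V -> V -> Cpx) n (x : nat -> V) :
  semi_inner_product phi -> definite phi -> indep n x ->
  \det (\matrix_(k < n, l < n) phi (x l) (x k)) != 0.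
Proof.
move=> phiP phi_def x_indep; apply/det0P => [[z z_neq0 zG0]].
set c := fun k => if insub k : option 'I_n is Some j then Cconj (z 0 j) else 0.
have cE (k : 'I_n) : c k = Cconj (z 0 k) by rewrite /c valK.
set w := \sum_(k < n) c k *: x k.
have xw0 (k : 'I_n) : phi (x k) w = 0.
  have /(f_equal (fun v : 'rV[Cpx]_n => v 0 k)) := zG0; rewrite !mxE => <-.
  by rewrite (sip_sumr phiP); apply: eq_bigr => l _; rewrite (sipZr phiP) cE CconjK mxE.
have w0 : w = 0.
  apply: phi_def; rewrite {1}/w (sip_suml phiP) big1 // => k _.
  by rewrite (sipZl phiP) xw0 mulr0.
move/eqP: z_neq0; apply; apply/rowP => k; rewrite mxE.
by have := x_indep c w0 k (ltn_ord k); rewrite cE => /(f_equal Cconj); rewrite CconjK Cconj0.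
Qed.

Lemma det_lastcol_mulmx (K : comNzRingType) n (G : 'M[K]_n.+1) (y : 'cV_n.+1) :
  \det (\matrix_(k, l) if (l < n)%N then G k l else (G *m y) k 0) = \det G * y ord_max 0.
Proof.
set E : 'M[K]_n.+1 := \matrix_(l, j) if (j < n)%N then ((l : nat) == j)%:R else y l 0.
have -> : \matrix_(k, l) (if (l < n)%N then G k l else (G *m y) k 0) = G *m E.
  apply/matrixP => k l; rewrite !mxE; case: ifP => lt_ln; last first.
    by apply: eq_bigr => i _; rewrite !mxE lt_ln.
  rewrite (bigD1 l) //= big1 ?addr0 => [|i /negbTE i_neq_l]; first by rewrite !mxE lt_ln eqxx mulr1.
  rewrite eq_sym -(inj_eq val_inj) in i_neq_l.
  by rewrite !mxE lt_ln eq_sym i_neq_l mulr0.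
rewrite det_mulmx; congr (_ * _); rewrite -det_tr det_trig; last first.
  apply/is_trig_mxP => i j lt_ji; rewrite !mxE.
  have lt_in : (i < n)%N by apply: leq_trans lt_ji _; rewrite -ltnS.
  by rewrite lt_in (gtn_eqF lt_ji).
rewrite big_ord_recr /= big1 ?mul1r; first by rewrite !mxE ltnn.
by move=> i _; rewrite !mxE /= ltn_ord eqxx.
Qed.

Lemma ltb_bump k j : (if Nat.ltb k j then k else S k) = bump j k.
Proof.
rewrite /bump; case: (Nat.ltb_spec k j) => [/ltP lt_kj | /leP le_jk].
  by rewrite leqNgt lt_kj.
by rewrite le_jk add1n.
Qed.

Lemma ltb_ltn i j : Nat.ltb i j = (i < j)%N.
Proof. by case: (Nat.ltb_spec i j) => [/ltP | /leP]; [|rewrite leqNgt => /negbTE]. Qed.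

Lemma det_matrixE n (M : nat -> nat -> R) :
  RtoC (det n M) = \det (\matrix_(i < n, j < n) RtoC (M i j)).
Proof.
elim: n M => [|m IH] M; first by rewrite det_mx00.
rewrite (expand_det_row _ ord0) /det -/det RtoC_Rsum; apply: eq_bigr => j _.
rewrite !RtoCM RtoC_sign IH /cofactor mxE add0n mulrA [RtoC _ * _]mulrC.
by congr (_ * \det _); apply/matrixP => i k; rewrite !mxE ltb_bump.
Qed.

Lemma det_lastcol_comb n (M : nat -> nat -> R) (b y : nat -> R) :
  (forall k, (k < n.+1)%N -> b k = Rsum n.+1 (fun j => M k j * y j)%Re) ->
  det n.+1 (fun k l => if Nat.ltb l n then M k l else b k) = (det n.+1 M * y n)%Re.
Proof.
move=> bE; apply: RtoC_inj; rewrite RtoCM !det_matrixE.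
set yv : 'cV[Cpx]_n.+1 := \col_j RtoC (y j).
have -> : RtoC (y n) = yv ord_max 0 by rewrite mxE.
rewrite -det_lastcol_mulmx; congr (\det _); apply/matrixP => k l; rewrite !mxE ltb_ltn.
case: ifP => // _; rewrite bE // RtoC_Rsum; apply: eq_bigr => j _.
by rewrite !mxE RtoCM.
Qed.

Section HilbertGlue.
Variable H : HilbertSpace.

Lemma inner_semi_inner_product : semi_inner_product (inner H).
Proof.
by split; [exact: inner_addl | exact: inner_scall | exact: inner_conj | exact: inner_pos].
Qed.

Lemma inner_definite : definite (inner H).
Proof. by move=> y; apply: inner_def. Qed.

Lemma vsum_sum n (f : nat -> H) : vsum H n f = \sum_(i < n) f i.
Proof. by elim: n => [|n IH] /=; rewrite ?big_ord0 // big_ord_recr IH. Qed.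

Lemma lin_indepP n (x : nat -> H) : lin_indep H n x <-> indep n x.
Proof.
split=> x_indep c cx0 i /ltP lt_in; apply: x_indep lt_in; first by rewrite vsum_sum.
by move: cx0; rewrite vsum_sum.
Qed.

Lemma orthonormal_forP n (u : nat -> H) : Defs.orthonormal H n u <-> orthonormal_for (inner H) n u.
Proof.
have eqbE i j : Nat.eqb i j = (i == j) by case: (Nat.eqb_spec i j); case: eqP.
by split=> u_on i j /ltP lt_in /ltP lt_jn; rewrite u_on // eqbE; case: eqP.
Qed.

End HilbertGlue.

Section LinearOperator.
Variables (H : HilbertSpace) (A : H -> H).
Hypothesis A_lin : is_linear_op H A.

Lemma opD x y : A (x + y) = A x + A y. Proof. exact: A_lin.1. Qed.
Lemma opZ a x : A (a *: x) = a *: A x. Proof. exact: A_lin.2. Qed.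
Lemma op0 : A 0 = 0. Proof. by have := opZ 0 0; rewrite !scale0r. Qed.
Lemma opB x y : A (x - y) = A x - A y. Proof. by rewrite opD -scaleN1r opZ scaleN1r. Qed.
Lemma op_sum n (G : 'I_n -> H) : A (\sum_(i < n) G i) = \sum_(i < n) A (G i).
Proof. exact: (big_morph A opD op0). Qed.

Lemma lin_indep_shift n (x : nat -> H) :
  lin_indep H n (fun i => A (x i)) -> indep n x.
Proof.
move=> /lin_indepP Ax_indep c cx0; apply: Ax_indep.
transitivity (A (\sum_(l < n) c l *: x l)); last by rewrite cx0 op0.
by rewrite op_sum; apply: eq_bigr => l _; rewrite opZ.
Qed.

Definition op_form x y := inner H (A x) y.

Hypotheses (A_sa : is_self_adjoint H A) (A_pos : is_positive_op H A).

Lemma op_form_semi_inner_product : semi_inner_product op_form.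
Proof.
split=> [x y z | a x y | x y | x]; rewrite /op_form ?opD ?opZ.
- exact: inner_addl.
- exact: inner_scall.
- by rewrite A_sa inner_conj.
- exact: A_pos.
Qed.

(* Cauchy-Schwarz for [op_form]: [op_form x x = 0] forces [(A x | A x) = op_form x (A x) = 0]. *)
Lemma pos_op_null x : Cre (inner H (A x) x) = 0%Re -> A x = 0.
Proof.
move=> Axx0; have x_null : op_form x x = 0.
  by rewrite (sip_real op_form_semi_inner_product) /op_form Axx0.
apply: inner_definite.
exact: (sip_null_orth op_form_semi_inner_product (A x) x_null).
Qed.

Section TraceBounds.
Variables (N : nat) (u : nat -> H).
Hypothesis u_on : orthonormal_for (inner H) N u.

Let ipP := inner_semi_inner_product H.

Definition op_trace n (w : nat -> H) := Rsum n (fun j => Cre (inner H (A (w j)) (w j))).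

Lemma op_trace_extend n (w : nat -> H) g :
  op_trace n.+1 (extend n w g) = (op_trace n w + Cre (inner H (A g) g))%Re.
Proof.
rewrite /op_trace /= extend_last; congr (_ + _)%Re.
by apply: Rsum_ext => i lt_in; rewrite extend_lt.
Qed.

(* If [A w <> 0] for some [w] orthogonal to [u], adjoining [w / |w|] to [u] gives an
   orthonormal family whose trace exceeds [t]. *)
Lemma trace_eq_kernel t : is_trace H A t -> op_trace N u = t ->
  forall w, (forall a, (a < N)%N -> inner H w (u a) = 0) -> A w = 0.
Proof.
move=> [t_ub _] trE w w_orth.
have [Aww0 | Aww_neq0] := Req_dec (Cre (inner H (A w) w)) 0; first exact: pos_op_null.
have Aww_gt0 : (0 < Cre (inner H (A w) w))%Re by have := A_pos w; lra.
have ww_gt0 : (0 < Cre (inner H w w))%Re.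
  case: (Rle_lt_or_eq_dec _ _ (sip_ge0 ipP w)) => // ww0; case: Aww_neq0.
  by rewrite (@inner_def H w) ?op0 ?(sip0l ipP) // (sip_real ipP) -ww0.
set g := normalize (inner H) w.
have Agg_gt0 : (0 < Cre (inner H (A g) g))%Re.
  rewrite /g /normalize opZ (sip_scale_real ipP) /= Rmult_0_l Rminus_0_r.
  by apply: Rmult_lt_0_compat => //; apply: Rmult_lt_0_compat;
    apply/Rinv_0_lt_compat/sqrt_lt_R0.
have le_t : (op_trace N.+1 (extend N u g) <= t)%Re.
  apply: t_ub; exists N.+1, (extend N u g); split=> //; apply/orthonormal_forP.
  apply: (orthonormal_extend ipP u_on) (normalize_unit ipP ww_gt0) => b lt_bN.
  by rewrite (sipZl ipP) w_orth // mulr0.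
by move: le_t; rewrite op_trace_extend trE; lra.
Qed.

Section RangeInSpan.
Hypothesis A_range : forall x, in_span N u (A x).

Lemma op_residual x : A (residual (inner H) N u x) = 0.
Proof.
apply: inner_definite; rewrite A_sa.
exact: (residual_orth_span ipP u_on).
Qed.

Lemma op_expand x : A x = \sum_(k < N) inner H x (u k) *: A (u k).
Proof.
have {1}-> : x = residual (inner H) N u x + \sum_(k < N) inner H x (u k) *: u k.
  by rewrite /residual subrK.
rewrite opD op_residual add0r op_sum.
by apply: eq_bigr => k _; rewrite opZ.
Qed.

(* Gram-Schmidt for [op_form] applied to [u] writes [A (u k)] over the [A (h a)]; then
   [A x = A (P x)] and self-adjointness turn the coefficients into [(x | A (h a))]. *)
Lemma op_factor : exists r (z : nat -> H), (forall a, in_span N u (z a)) /\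
  forall x, A x = \sum_(a < r) inner H x (z a) *: z a.
Proof.
have opP := op_form_semi_inner_product.
have [r [h [_ _ res_null _]]] := gram_schmidt opP N u.
exists r, (fun a => A (h a)); split=> [a | x]; first exact: A_range.
have Au k : (k < N)%N -> A (u k) = \sum_(a < r) op_form (u k) (h a) *: A (h a).
  move=> lt_kN; apply/eqP; rewrite -subr_eq0.
  have -> : \sum_(a < r) op_form (u k) (h a) *: A (h a) =
            A (\sum_(a < r) op_form (u k) (h a) *: h a).
    by rewrite op_sum; apply: eq_bigr => a _; rewrite opZ.
  rewrite -opB; apply/eqP/pos_op_null.
  by have := res_null k lt_kN; rewrite (sip_real opP) => /(f_equal Cre).
rewrite op_expand (eq_bigr (fun k : 'I_N =>
  \sum_(a < r) (inner H x (u k) * op_form (u k) (h a)) *: A (h a))); last first.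
  by move=> k _; rewrite Au // scaler_sumr; apply: eq_bigr => a _; rewrite scalerA.
rewrite exchange_big /=; apply: eq_bigr => a _; rewrite -scaler_suml; congr (_ *: _).
have Ah_exp : A (h a) = \sum_(k < N) inner H (A (h a)) (u k) *: u k.
  have := residual_span_eq0 ipP (@inner_definite H) u_on (A_range (h a)).
  by rewrite /residual => /eqP; rewrite subr_eq0 => /eqP.
rewrite [in RHS]Ah_exp (sip_sumr ipP); apply: eq_bigr => k _.
by rewrite (sipZr ipP) -(sipC ipP) /op_form A_sa mulrC.
Qed.

(* The trace over any orthonormal [w] is [sum_a sum_j |(z a | w j)|^2]; Bessel bounds it
   by [sum_a |z a|^2], which Parseval equates with the trace over [u]. *)
Lemma trace_le_of_range n w : orthonormal_for (inner H) n w -> (op_trace n w <= op_trace N u)%Re.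
Proof.
move=> w_on; have [r [z [z_span Az]]] := op_factor.
have trE m (v : nat -> H) : op_trace m v =
    Rsum r (fun a => Cre (\sum_(j < m) inner H (z a) (v j) * Cconj (inner H (z a) (v j)))).
  rewrite /op_trace -Cre_sum -Cre_sum; congr Cre; rewrite exchange_big /=.
  apply: eq_bigr => j _; rewrite Az (sip_suml ipP); apply: eq_bigr => a _.
  by rewrite (sipZl ipP) (sipC ipP (z a)) mulrC.
rewrite !trE; apply: Rsum_le => a _; rewrite (parseval ipP (@inner_definite H) u_on) //.
exact: (bessel ipP w_on).
Qed.

End RangeInSpan.
End TraceBounds.
End LinearOperator.

Definition krylov (H : HilbertSpace) (A : H -> H) (e : H) i := Nat.iter i A e.

(* If [A^n e] depends linearly on [e, ..., A^(n-1) e] but not on [A e, ..., A^(n-1) e],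
   solving for [e] exhibits it as [A] applied to a combination of [e, ..., A^(n-2) e]. *)
Lemma krylov_relation_in_range (H : HilbertSpace) (A : H -> H) (e : H) n (c : nat -> Cpx) :
  is_linear_op H A -> (0 < n)%N -> indep n (fun i => krylov A e i.+1) ->
  krylov A e n = \sum_(l < n) c l *: krylov A e l -> in_range H A e.
Proof.
case: n => // n A_lin _ shift_indep; rewrite big_ord_recl /=.
set S := \sum_(i < n) _; have S_span : in_span n (fun i => krylov A e i.+1) S.
  by exists (fun l => c l.+1).
move=> vn; have [c00 | c0_neq0] := eqVneq (c 0%N) 0.
  case: (indep_last_notin_span shift_indep).
  by rewrite /= vn c00 scale0r add0r.
exists ((c 0%N)^-1 *: (krylov A e n - \sum_(i < n) c i.+1 *: krylov A e i)).
rewrite (opZ A_lin) (opB A_lin) (op_sum A_lin).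
rewrite (eq_bigr (fun i : 'I_n => c i.+1 *: krylov A e i.+1)) => [|i _]; last by rewrite (opZ A_lin).
by rewrite vn -/S addrK scalerA mulVf ?scale1r.
Qed.

Section Krylov.
Variables (H : HilbertSpace) (A : H -> H) (e : H) (N : nat).
Hypotheses (A_lin : is_linear_op H A) (A_sa : is_self_adjoint H A).
Hypothesis shift_indep : lin_indep H N (fun i => Nat.iter i.+1 A e).

Local Notation v := (krylov A e).
Let ipP := inner_semi_inner_product H.

Lemma krylov_indep : indep N v.
Proof. exact: (@lin_indep_shift H A A_lin N v shift_indep). Qed.

Lemma inner_krylov l k : inner H (v l) (v k) = RtoC (moment H A e (k + l)).
Proof.
have shift i j : inner H (v (i + j)) (v 0) = inner H (v i) (v j).
  elim: j i => [|j IH] i; first by rewrite addn0.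
  by rewrite addnS -addSn IH; apply: A_sa.
rewrite -shift; apply: Cpx_ext; first by rewrite /moment (addnC k l).
have := shift 0%N (l + k)%N; rewrite add0n (sipC ipP (v (l + k)%N) (v 0)).
by move=> /(f_equal Cim) /= Him /=; lra.
Qed.

Lemma krylov_basis : exists (u : nat -> H) (alpha : nat -> nat -> Cpx),
  [/\ orthonormal_for (inner H) N u,
      forall a, (a < N)%N -> u a = \sum_(l < N) alpha a l *: v l &
      forall k, (k < N)%N -> v k = \sum_(a < N) inner H (v k) (u a) *: u a].
Proof.
have [r [u [u_on u_span res_null r_eq]]] := gram_schmidt ipP N v.
rewrite r_eq in u_on u_span res_null; last exact: krylov_indep; last exact: inner_definite.
have [alpha u_alpha] := span_coef_choice u_span.
exists u, alpha; split=> // k lt_kN.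
have /inner_definite := res_null k lt_kN.
by rewrite /residual => /eqP; rewrite subr_eq0 => /eqP.
Qed.

End Krylov.

Section KrylovBasis.
Variables (H : HilbertSpace) (A : H -> H) (e : H) (N : nat).
Variables (u : nat -> H) (alpha : nat -> nat -> Cpx).
Hypotheses (A_lin : is_linear_op H A) (A_sa : is_self_adjoint H A).
Hypothesis N_gt0 : (0 < N)%N.
Hypothesis shift_indep : lin_indep H N (fun i => Nat.iter i.+1 A e).

Local Notation v := (krylov A e).
Let ipP := inner_semi_inner_product H.
Let v_indep : indep N v := krylov_indep A_lin shift_indep.

Hypothesis u_on : orthonormal_for (inner H) N u.
Hypothesis u_alpha : forall a, (a < N)%N -> u a = \sum_(l < N) alpha a l *: v l.
Hypothesis v_u : forall k, (k < N)%N -> v k = \sum_(a < N) inner H (v k) (u a) *: u a.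

Lemma krylov_pred : v N = A (v N.-1).
Proof. by rewrite -[in LHS](prednK N_gt0). Qed.

(* The coordinate on [v l] of the orthogonal projection of [y] on [span v]. *)
Definition coord l y := \sum_(i < N) inner H y (u i) * alpha i l.

Lemma proj_coord y :
  \sum_(i < N) inner H y (u i) *: u i = \sum_(l < N) coord l y *: v l.
Proof.
rewrite (eq_bigr (fun i : 'I_N => \sum_(l < N) (inner H y (u i) * alpha i l) *: v l));
  last by move=> i _; rewrite u_alpha // scaler_sumr; apply: eq_bigr => l _; rewrite scalerA.
by rewrite exchange_big; apply: eq_bigr => l _; rewrite scaler_suml.
Qed.

Lemma coord_krylov k l : (k < N)%N -> (l < N)%N -> coord l (v k) = (k == l)%:R.
Proof.
move=> lt_kN lt_lN; rewrite eq_sym; apply/eqP; rewrite -subr_eq0; apply/eqP.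
apply: (v_indep (c := fun j => coord j (v k) - (j == k)%:R)) lt_lN.
rewrite (eq_bigr (fun l : 'I_N => coord l (v k) *: v l - v l *+ (l == k :> nat)));
  last by move=> j _; rewrite scalerBl scaler_nat.
by rewrite sumrB (sum_ord_delta v) // -proj_coord -v_u // subrr.
Qed.

(* The trace is [sum_l coord l (A (v l))], and [coord l (v (l+1))] vanishes unless [l = N-1]. *)
Lemma trace_basis : \sum_(i < N) inner H (A (u i)) (u i) = coord N.-1 (v N).
Proof.
rewrite (eq_bigr (fun i : 'I_N => \sum_(l < N) inner H (v l.+1) (u i) * alpha i l)); last first.
  move=> i _; rewrite {1}u_alpha // (op_sum A_lin) (sip_suml ipP).
  by apply: eq_bigr => l _; rewrite (opZ A_lin) (sipZl ipP) mulrC.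
have lt_N'N : (N.-1 < N)%N by rewrite prednK.
rewrite exchange_big /= (bigD1 (Ordinal lt_N'N)) //= [X in _ + X]big1 ?addr0 => [|l /eqP l_neq].
  by rewrite /coord krylov_pred.
have lt_l1N : (l.+1 < N)%N.
  rewrite ltn_neqAle ltn_ord andbT; apply/eqP => l1N; apply: l_neq.
  by apply: val_inj; move: l1N => /(f_equal predn).
by rewrite -/(coord l (v l.+1)) coord_krylov // (gtn_eqF (ltnSn l)).
Qed.

Lemma moment_normal_eq k : (k < N)%N ->
  moment H A e (k + N) = Rsum N (fun l => moment H A e (k + l) * Cre (coord l (v N)))%Re.
Proof.
move=> lt_kN.
have : inner H (residual (inner H) N u (v N)) (v k) = 0.
  by apply: (residual_orth_span ipP u_on); exists (fun a => inner H (v k) (u a)); apply: v_u.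
rewrite (sipBl ipP) proj_coord (sip_suml ipP) => /eqP; rewrite subr_eq0 => /eqP.
move=> /(f_equal Cre); rewrite (inner_krylov e A_sa) /= => ->.
rewrite (Cre_sum N (fun l => inner H (coord l (v N) *: v l) (v k))).
by apply: Rsum_ext => l _; rewrite (sipZl ipP) (inner_krylov e A_sa) CreM /=; ring.
Qed.

Lemma gram_det_krylov_neq0 : gram_det H A e N <> 0%Re.
Proof.
move=> det0; have := gram_det_neq0 ipP (@inner_definite H) v_indep.
have -> : \matrix_(k < N, l < N) inner H (v l) (v k) =
          \matrix_(k < N, l < N) RtoC (moment H A e (k + l)%N).
  by apply/matrixP => k l; rewrite !mxE (inner_krylov e A_sa).
have := det_matrixE N (fun k l => moment H A e (k + l)%N).
by rewrite -/(gram_det H A e N) det0 /= => <-; rewrite eqxx.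
Qed.

(* By the normal equations the last column of the numerator is the Gram matrix applied to
   the coordinates of the projection of [v N], so Cramer's rule applies. *)
Lemma num_det_krylov : num_det H A e N = (gram_det H A e N * Cre (coord N.-1 (v N)))%Re.
Proof.
rewrite /num_det /gram_det Nat.sub_1_r.
have := @det_lastcol_comb N.-1 (fun k l => moment H A e (k + l)%N)
  (fun k => moment H A e (k + N)%N) (fun l => Cre (coord l (v N))).
by rewrite (prednK N_gt0) => -> // k; apply: moment_normal_eq.
Qed.

Lemma trace_basis_value : op_trace A N u = (num_det H A e N / gram_det H A e N)%Re.
Proof.
rewrite num_det_krylov /op_trace -Cre_sum trace_basis.
by field; apply: gram_det_krylov_neq0.
Qed.

Section Kernel.
Hypothesis A_ker : forall w, (forall a, (a < N)%N -> inner H w (u a) = 0) -> A w = 0.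

Lemma op_proj x : A x = A (\sum_(l < N) coord l x *: v l).
Proof.
have {1}-> : x = residual (inner H) N u x + \sum_(i < N) inner H x (u i) *: u i.
  by rewrite /residual subrK.
rewrite (opD A_lin) A_ker ?add0r ?proj_coord // => a lt_aN.
exact: (residual_orth ipP u_on).
Qed.

Lemma range_dim_krylov : range_dim H A N.
Proof.
exists (fun i => v i.+1); split=> [|y]; first exact: shift_indep.
split=> [[x ->] | [c ->]].
  exists (fun l => coord l x); rewrite vsum_sum op_proj (op_sum A_lin).
  by apply: eq_bigr => l _; rewrite (opZ A_lin).
exists (\sum_(i < N) c i *: v i); rewrite vsum_sum (op_sum A_lin).
by apply: eq_bigr => i _; rewrite (opZ A_lin).
Qed.

Lemma in_range_krylov : in_range H A e.
Proof.
apply: (@krylov_relation_in_range _ _ _ N (coord^~ (v N)) A_lin N_gt0).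
  exact/lin_indepP.
(* The residual [z] of [v N = A (v (N-1))] is killed by [A], so [(z | z) = (v (N-1) | A z) = 0]. *)
set z := residual (inner H) N u (v N).
have z_ker : A z = 0 by apply: A_ker => a lt_aN; apply: (residual_orth ipP u_on).
have z0 : z = 0.
  apply: inner_definite; rewrite {1}/z /residual (sipBl ipP) [X in _ - X](sipC ipP).
  rewrite (residual_orth_span ipP u_on) ?Cconj0 ?subr0; last by exists (fun a => inner H (v N) (u a)).
  by rewrite krylov_pred A_sa z_ker (sip0r ipP).
by rewrite -proj_coord; apply/eqP; rewrite -subr_eq0; apply/eqP.
Qed.

End Kernel.

Section RangeKrylov.
Hypotheses (A_pos : is_positive_op H A) (A_range : range_dim H A N) (e_range : in_range H A e).

Lemma krylov_range_span x : in_span N v (A x).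
Proof.
(* [e, ..., A^(N-1) e] are [N] independent vectors of the [N]-dimensional range. *)
have [b [_ b_span]] := A_range.
have range_span y : (exists x, y = A x) -> in_span N b y.
  by move=> /b_span [c ->]; exists c; rewrite vsum_sum.
apply: (in_span_indep_full v_indep) (range_span _ (ex_intro _ x erefl)) => i _.
apply: range_span; case: i => [|i]; last by exists (v i).
by have [x0 <-] := e_range; exists x0.
Qed.

Lemma trace_le_krylov n w : orthonormal_for (inner H) n w -> (op_trace A n w <= op_trace A N u)%Re.
Proof.
apply: (trace_le_of_range A_lin A_sa A_pos u_on) => x.
apply: in_span_trans (krylov_range_span x) => i lt_iN.
by exists (fun a => inner H (v i) (u a)); apply: v_u.
Qed.

End RangeKrylov.
End KrylovBasis.
Close Scope ring_scope.

Theorem lemma7 (H : HilbertSpace) (A : H -> H) (e : H) (N : nat) (t : R) :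
  is_linear_op H A -> is_bounded_op H A ->
  is_self_adjoint H A -> is_positive_op H A ->
  is_trace H A t ->
  (Peano.le 1 N) ->
  lin_indep H N (fun i => Nat.iter (S i) A e) ->
  num_det H A e N / gram_det H A e N <= t /\
  (t = num_det H A e N / gram_det H A e N <-> (range_dim H A N /\ in_range H A e)).
Proof.
move=> A_lin _ A_sa A_pos trA /ltP N_gt0 shift_indep.
have [u [alpha [u_on u_alpha v_u]]] := krylov_basis A_lin shift_indep.
have trE : op_trace A N u = num_det H A e N / gram_det H A e N.
  exact: (trace_basis_value (u := u) (alpha := alpha)).
have [t_ub t_lub] := trA.
have le_t : num_det H A e N / gram_det H A e N <= t.
  by rewrite -trE; apply: t_ub; exists N, u; split; first exact/orthonormal_forP.
split=> //; split=> [tE | [A_range e_range]].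
  have A_ker := trace_eq_kernel A_lin A_sa A_pos u_on trA (etrans trE (esym tE)).
  by split; [apply: (range_dim_krylov (e := e) (u := u) (alpha := alpha)) |
              apply: (in_range_krylov (N := N) (u := u) (alpha := alpha))].
apply: Rle_antisym => //; apply: t_lub => _ [n [w [/orthonormal_forP w_on ->]]].
by rewrite -trE; apply: (trace_le_krylov (e := e) (u := u)).
Qed.
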